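(* Let $0 < \nu \leq \tau < \eta \ll 1$ be constants. Suppose $G$ is a graph on $n$ vertices with $\delta(G) \geq \eta n$ which is a robust $(\nu,\tau)$-expander, and let $M$ be a perfect matching in $G$. Then for every $a \in V(G)$, $G$ contains a shifted $M$-walk of length at most $3/\nu$ which both starts and finishes at $a$.
   Context: The notation $\eta \ll 1$ means $\eta$ is chosen sufficiently small (below some absolute positive constant). For a graph $G$ on $n$ vertices and $S \subseteq V(G)$, $RN_{\nu,G}(S)$ is the set of vertices $v$ with $|N(v) \cap S| \geq \nu n$; $G$ is a robust $(\nu,\tau)$-expander if every $S \subseteq V(G)$ with $\tau n \leq |S| \leq (1-\tau)n$ satisfies $|RN_{\nu,G}(S)| \geq |S| + \nu n$. Given a perfect matching $M$ in $G$, a shifted $M$-walk with endpoints $v_1$ and $v_{2\ell}$ is a walk $v_1 v_2 \dots v_{2\ell}$ in $G$ such that $v_{2i}v_{2i+1} \in M$ for every $1 \leq i \leq \ell - 1$ and $v_{2i-1}v_{2i} \notin M$ for every $1 \leq i \leq \ell$; its length is its number of edges. *)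

From HB Require Import structures.
From mathcomp Require Import all_boot all_order all_algebra.
Set Implicit Arguments. Unset Strict Implicit. Unset Printing Implicit Defensive.
Import Order.TTheory GRing.Theory Num.Theory.
Local Open Scope ring_scope.

Definition simple_graph (T : finType) (G : rel T) : Prop :=
  (forall x y, G x y = G y x) /\ (forall x, ~~ G x x).

Definition nbhd (T : finType) (G : rel T) (v : T) : {set T} := [set u | G v u].

Definition min_deg_ge (R : realFieldType) (T : finType) (G : rel T) (d : R) : Prop :=
  forall v : T, d <= (#|nbhd G v|)%:R.

Definition robust_nbhd (R : realFieldType) (T : finType) (G : rel T) (nu : R)
  (S : {set T}) : {set T} :=
  [set v | nu * (#|T|)%:R <= (#|nbhd G v :&: S|)%:R].

Definition robust_expander (R : realFieldType) (T : finType) (G : rel T)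
  (nu tau : R) : Prop :=
  forall S : {set T},
    tau * (#|T|)%:R <= (#|S|)%:R -> (#|S|)%:R <= (1 - tau) * (#|T|)%:R ->
    (#|S|)%:R + nu * (#|T|)%:R <= (#|robust_nbhd G nu S|)%:R.

Definition perfect_matching (T : finType) (G M : rel T) : Prop :=
  (forall x y, M x y = M y x) /\ (forall x y, M x y -> G x y) /\
  (forall x, #|[set y | M x y]| = 1%N).

Definition is_walk (T : finType) (G : rel T) (s : seq T) : Prop :=
  (0 < size s)%N /\ forall (x0 : T) j, (j.+1 < size s)%N -> G (nth x0 s j) (nth x0 s j.+1).

(* Shifted M-walk v_1 ... v_{2l} (l >= 1), stored 0-indexed as s = [v_1;...;v_{2l}]:
   v_{2i} v_{2i+1} in M for 1 <= i <= l-1, and v_{2i-1} v_{2i} not in M for 1 <= i <= l. *)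
Definition shifted_walk (T : finType) (G M : rel T) (s : seq T) : Prop :=
  exists l : nat, (0 < l)%N /\ size s = (2 * l)%N /\ is_walk G s /\
    (forall (x0 : T) i, (1 <= i <= l - 1)%N ->
       M (nth x0 s (2 * i - 1)) (nth x0 s (2 * i))) /\
    (forall (x0 : T) i, (1 <= i <= l)%N ->
       ~~ M (nth x0 s (2 * i - 2)) (nth x0 s (2 * i - 1))).

Definition walk_length (T : Type) (s : seq T) : nat := (size s).-1.

From HB Require Import structures.
From mathcomp Require Import all_boot all_order all_algebra.
From mathcomp Require Import zify lra.
Import Order.TTheory GRing.Theory Num.Theory.
Set Implicit Arguments.
Unset Strict Implicit.
Unset Printing Implicit Defensive.

Local Open Scope ring_scope.

(* Let a' be the M-partner of a and let B_k be the set of ends of shifted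
   M-walks from a with at most k non-matching edges, together with a' (the
   end of the empty walk followed by the matching edge aa').  As long as no
   M-edge lies inside B_k, the sets B_k and M(B_k) are disjoint, so
   |B_k| <= n/2, and robust expansion of M(B_k) gives |B_{k+1}| >= |B_k| + nu n.
   Since |B_1| >= deg(a) >= eta n, some B_k with k <= 1/(2 nu) + 1 contains an
   M-edge vw; the walk from a to v, the edge vw and the reversed walk from w
   to a form the required closed walk. *)

Lemma seq_ind2 (A : Type) (P : seq A -> Prop) :
  P [::] -> (forall x, P [:: x]) -> (forall x y s, P s -> P [:: x, y & s]) ->
  forall s, P s.
Proof.
move=> P0 P1 P2 s; suff [] : P s /\ forall x, P (x :: s) by [].
by elim: s => [|y s [Ps Pys]]; split=> // x; apply: P2.
Qed.

Section AlternatingWalks.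
Variables (T : finType) (G M : rel T).

Fixpoint alt_walk (s : seq T) : bool :=
  if s is x :: y :: t then
    [&& G x y, ~~ M x y & if t is z :: _ then M y z && alt_walk t else true]
  else false.

Lemma alt_walk_shifted s : subrel M G -> alt_walk s -> shifted_walk G M s.
Proof.
move=> MG; elim/seq_ind2: s => // x y [|z t] IH /and3P [Gxy nMxy].
  move=> _; exists 1%N; do !split=> //.
  - by move=> x0 [|j].
  - by move=> x0 i; lia.
  - by move=> x0 i Hi; have -> : i = 1%N by lia.
case/andP=> Myz /IH [l [l0 [szl [[_ wt] [Mt nMt]]]]].
exists l.+1; split=> //; split; first by move: szl => /= ->; lia.
split; first split=> // x0 [|[|j]] /= Hj //; first exact: MG.
  by apply: wt; rewrite /= in Hj *; lia.
split=> x0 [|[|i]] Hi //.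
- rewrite (_ : (2 * i.+2 - 1 = (2 * i.+1 - 1).+2)%N); last by lia.
  by rewrite (_ : (2 * i.+2 = (2 * i.+1).+2)%N) ?Mt; lia.
- rewrite (_ : (2 * i.+2 - 2 = (2 * i.+1 - 2).+2)%N); last by lia.
  by rewrite (_ : (2 * i.+2 - 1 = (2 * i.+1 - 1).+2)%N) ?nMt; lia.
Qed.

Lemma alt_walk_cat x0 s1 s2 :
  alt_walk s1 -> alt_walk s2 -> M (last x0 s1) (head x0 s2) ->
  alt_walk (s1 ++ s2).
Proof.
elim/seq_ind2: s1 => // x y [|z t] IH /and3P [Gxy nMxy].
  by case: s2 {IH} => // z s2 _; rewrite /= Gxy nMxy => -> ->.
case/andP=> Myz wt w2 Ml; have /= := IH wt w2 Ml.
by rewrite /= Gxy nMxy Myz.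
Qed.

Hypotheses (Gsym : symmetric G) (Msym : symmetric M).

Lemma alt_walk_rev s : alt_walk s -> alt_walk (rev s).
Proof.
elim/seq_ind2: s => // x y t IH /and3P [Gxy nMxy Ht].
have -> : rev [:: x, y & t] = rev t ++ [:: y; x].
  by rewrite !rev_cons -!cats1 -catA.
have wyx : alt_walk [:: y; x] by rewrite /= Gsym Msym Gxy nMxy.
case: t IH Ht => [|z t] // IH /andP [Myz /IH wt].
by apply: (alt_walk_cat (x0 := z)) => //; rewrite rev_cons last_rcons Msym.
Qed.

End AlternatingWalks.

Section Partner.
Variables (T : finType) (G M : rel T).
Hypothesis matchingM : perfect_matching G M.

Definition partner (x : T) : T := odflt x [pick y | M x y].

Lemma matchE x y : M x y = (y == partner x).
Proof.
have [_ [_ /(_ x) /eqP/cards1P [z Mx]]] := matchingM.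
have Mxz y' : M x y' = (y' == z) by rewrite -in_set1 -Mx inE.
rewrite Mxz /partner; case: pickP => [y' | /(_ z)]; rewrite Mxz ?eqxx //.
by move=> /eqP ->.
Qed.

Lemma partner_match x : M x (partner x).
Proof. by rewrite matchE. Qed.

Lemma partnerK : involutive partner.
Proof.
have [Msym _] := matchingM.
by move=> x; apply/esym/eqP; rewrite -matchE Msym partner_match.
Qed.

Lemma partner_inj : injective partner.
Proof. exact: inv_inj partnerK. Qed.

Lemma partner_disjoint_card (B : {set T}) :
  [disjoint B & partner @: B] -> (2 * #|B| <= #|T|)%N.
Proof.
move=> disjB; have /eqP := (leq_card_setU B (partner @: B)).2.
rewrite disjB card_imset; last exact: partner_inj.
by rewrite mul2n -addnn => <-; apply: max_card.
Qed.

End Partner.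

Section AlternatingBall.
Variables (T : finType) (G M : rel T).
Hypotheses (graphG : simple_graph G) (matchingM : perfect_matching G M).
Local Notation partner := (partner M).

Definition alt_step (B : {set T}) : {set T} :=
  B :|: [set v | [exists u in B, G (partner u) v && (v != u)]].

Definition alt_ball (a : T) (k : nat) : {set T} := iter k alt_step [set partner a].

Lemma alt_ball_walk a k v : v \in alt_ball a k -> v = partner a \/
  exists s, [/\ alt_walk G M s, head a s = a, last a s = v & (size s <= 2 * k)%N].
Proof.
elim: k v => [|k IH] v; first by rewrite inE => /eqP; left.
rewrite inE => /orP [/IH [-> | [s [ws hs ls zs]]] | ]; [by left | |].
  by right; exists s; split=> //; lia.
rewrite inE => /exists_inP [u /IH Hu /andP [Guv vu]]; right.
have nMuv : ~~ M (partner u) v by rewrite (matchE matchingM) (partnerK matchingM).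
case: Hu => [Eu | [s [ws hs ls zs]]].
  move: Guv nMuv; rewrite Eu (partnerK matchingM) => Gav nMav.
  by exists [:: a; v]; rewrite /= Gav nMav; split=> //; lia.
exists (s ++ [:: partner u; v]); split.
- apply: (alt_walk_cat (x0 := a)) => //=; first by rewrite Guv nMuv.
  by rewrite ls (partner_match matchingM).
- by case: s ws hs {ls zs}.
- by rewrite last_cat.
- by rewrite size_cat /=; lia.
Qed.

Lemma alt_ball_closed a k v :
  v \in alt_ball a k -> partner v \in alt_ball a k ->
  exists s, [/\ alt_walk G M s, head a s = a, last a s = a & (size s <= 4 * k)%N].
Proof.
have [Gsym Girr] := graphG; have [Msym [MG _]] := matchingM.
have partner_neq x : partner x != x.
  by apply: contraNneq (Girr x) => Ex; rewrite -{2}Ex MG ?(partner_match matchingM).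
move=> /alt_ball_walk [Ev | [s1 [w1 h1 l1 z1]]].
  move=> /alt_ball_walk [Epv | [s2 [w2 h2 l2 z2]]].
    by move: (partner_neq v); rewrite Epv Ev eqxx.
  by exists s2; rewrite l2 Ev (partnerK matchingM); split=> //; lia.
move=> /alt_ball_walk [/(partner_inj matchingM) Ev | [s2 [w2 h2 l2 z2]]].
  by exists s1; rewrite l1 Ev; split=> //; lia.
exists (s1 ++ rev s2); split.
- apply: (alt_walk_cat (x0 := a)) => //; first exact: alt_walk_rev.
  case/lastP: s2 w2 {h2 z2} l2 => [|s2 x] // _.
  by rewrite rev_rcons last_rcons /= => ->; rewrite l1 (partner_match matchingM).
- by case: s1 w1 h1 {l1 z1}.
- by case: s2 w2 h2 {l2 z2} => // x s2 _ /= ->; rewrite last_cat rev_cons last_rcons.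
- by rewrite size_cat size_rev; lia.
Qed.

Lemma nbhd_sub_alt_ball a : nbhd G a \subset alt_ball a 1.
Proof.
apply/subsetP => v; rewrite inE => Gav; rewrite !inE.
case: eqVneq => [//|vNpa] /=; apply/exists_inP; exists (partner a).
  by rewrite inE.
by rewrite (partnerK matchingM) Gav.
Qed.

Lemma alt_step_nbhd (B : {set T}) v :
  (0 < #|nbhd G v :&: partner @: B|)%N -> v \in alt_step B.
Proof.
have [Gsym _] := graphG.
case/card_gt0P => w; rewrite !inE => /andP [Gvw /imsetP [u uB Ew]].
case: (eqVneq v u) => [-> | vNu]; first by rewrite uB.
by apply/orP; right; apply/exists_inP; exists u; rewrite // -Ew Gsym Gvw.
Qed.

End AlternatingBall.

Section Expansion.
Variables (R : realFieldType) (nu tau eta : R) (T : finType) (G M : rel T).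
Hypotheses (nu_gt0 : 0 < nu) (eta_ge0 : 0 <= eta).
Hypotheses (tau_le_eta : tau <= eta) (tau_le_half : tau <= 1 / 2).
Hypotheses (graphG : simple_graph G) (degG : min_deg_ge G (eta * #|T|%:R)).
Hypotheses (expG : robust_expander G nu tau) (matchingM : perfect_matching G M).
Variable a : T.

Local Notation n := (#|T|%:R : R).
Local Notation ball k := (alt_ball G M a k).
Local Notation partner := (partner M).

Let n_gt0 : 0 < n.
Proof. by rewrite ltr0n; apply/card_gt0P; exists a. Qed.

Lemma alt_ball_expand k :
  tau * n <= #|ball k|%:R -> [disjoint ball k & partner @: ball k] ->
  #|ball k|%:R + nu * n <= #|ball k.+1|%:R.
Proof.
move=> lo disj.
have hi : #|ball k|%:R <= (1 - tau) * n.
  have := partner_disjoint_card matchingM disj; rewrite -(ler_nat R) natrM.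
  have : 0 <= (1 / 2 - tau) * n by rewrite mulr_ge0 ?subr_ge0 // ltW.
  lra.
have := expG; rewrite /robust_expander => /(_ (partner @: ball k)).
rewrite card_imset; last exact: partner_inj matchingM.
move=> /(_ lo hi) /le_trans; apply; rewrite ler_nat; apply: subset_leq_card.
apply/subsetP => v; rewrite inE => RNv; apply: alt_step_nbhd => //.
by rewrite -(ltr_nat R); apply: lt_le_trans RNv; rewrite mulr_gt0.
Qed.

Lemma alt_ball_growth k : [disjoint ball k.+1 & partner @: ball k.+1] ->
  (k < #|ball k.+1|)%N /\ eta * n + k%:R * (nu * n) <= #|ball k.+1|%:R.
Proof.
elim: k => [|k IH] disj.
  split; first by apply/card_gt0P; exists (partner a); rewrite !inE eqxx.
  rewrite mul0r addr0; apply: le_trans (degG a) _.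
  by rewrite ler_nat subset_leq_card ?nbhd_sub_alt_ball.
have sub_ball : ball k.+1 \subset ball k.+2 by apply: subsetUl.
have [lt_k grow] := IH (disjointW sub_ball (imsetS _ sub_ball) disj).
have knun_ge0 : 0 <= k%:R * (nu * n) by rewrite !mulr_ge0 // ltW.
have nun_gt0 : 0 < nu * n by rewrite mulr_gt0.
have lo : tau * n <= #|ball k.+1|%:R.
  have : tau * n <= eta * n by rewrite ler_wpM2r // ltW.
  lra.
have := alt_ball_expand lo (disjointW sub_ball (imsetS _ sub_ball) disj).
move=> expand; split.
  by apply: leq_ltn_trans lt_k _; rewrite -(ltr_nat R); lra.
by rewrite -natr1 mulrDl mul1r; lra.
Qed.

Lemma alt_ball_radius k :
  [disjoint ball k.+1 & partner @: ball k.+1] -> k%:R * nu <= 1 / 2.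
Proof.
move=> disj; have [_ grow] := alt_ball_growth disj.
have := partner_disjoint_card matchingM disj; rewrite -(ler_nat R) natrM => card.
have etan_ge0 : 0 <= eta * n by rewrite mulr_ge0 // ltW.
by rewrite -(ler_pM2r n_gt0) -mulrA; lra.
Qed.

Lemma alt_ball_collides : exists k, ~~ [disjoint ball k.+1 & partner @: ball k.+1].
Proof.
by exists #|T|; apply/negP => /alt_ball_growth [+ _]; rewrite ltnNge max_card.
Qed.

Lemma alt_walk_closed_short : nu <= 1 / 8 -> exists s,
  [/\ alt_walk G M s, head a s = a, last a s = a & (walk_length s)%:R * nu <= 3].
Proof.
move=> nu_small; case: (ex_minnP alt_ball_collides) => K collK minK.
have radius : K.-1%:R * nu <= 1 / 2.
  case: K collK minK => [|K] _ minK; first by rewrite mul0r; lra.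
  by apply: alt_ball_radius; apply/negPn/negP => /minK; rewrite ltnn.
case/pred0Pn: collK => v /andP [/= v_ball /imsetP [u u_ball Ev]].
rewrite {}Ev in v_ball.
have [s [ws hs ls size_s]] := alt_ball_closed graphG matchingM (k := K.+1) u_ball v_ball.
exists s; split=> //.
have : (walk_length s <= 4 * K.-1 + 7)%N by rewrite /walk_length; lia.
rewrite -(ler_nat R) natrD natrM => /(ler_wpM2r (ltW nu_gt0)); lra.
Qed.

End Expansion.

Theorem lemma5p3 :
  exists eta0 : rat, 0 < eta0 /\
  forall (R : realFieldType) (nu tau eta : R),
    0 < nu -> nu <= tau -> tau < eta -> eta <= ratr eta0 ->
  forall (T : finType) (G M : rel T),
    simple_graph G ->
    min_deg_ge G (eta * (#|T|)%:R) ->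
    robust_expander G nu tau ->
    perfect_matching G M ->
  forall a : T, exists s : seq T,
    shifted_walk G M s /\ head a s = a /\ last a s = a /\
    (walk_length s)%:R <= 3 / nu.
Proof.
exists 8^-1; split=> // R nu tau eta nu_gt0 nu_le_tau tau_lt_eta.
rewrite fmorphV rmorph_nat => eta_small T G M graphG degG expG matchingM a.
have [||||s [ws hs ls len]] := alt_walk_closed_short nu_gt0 _ _ _ graphG degG expG
  matchingM a _; try lra.
have [_ [MG _]] := matchingM.
exists s; do !split=> //; first exact: alt_walk_shifted ws.
by rewrite ler_pdivlMr.
Qed.
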